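(* Let $\mathbb{V}$ be a BIT speciale variety with signature $\mathcal{F}$ and BIT speciale terms $0,\alpha_1,\dots,\alpha_n,\theta$, let $A$ be a $\mathbb{V}$-algebra and $H$ a non-empty subset of $A$. For an operation $\tau$ of arity $k$, elements $a_1,\dots,a_k\in A$ and $1\le i\le n$, consider the conditions (A) $\alpha_i\big(\tau(\theta(h_{11},\dots,h_{1n},a_1),\dots,\theta(h_{k1},\dots,h_{kn},a_k)),\tau(a_1,\dots,a_k)\big)\in H$ for all $h_{rs}\in H$; (B) $\alpha_i(\theta(h_1,\dots,h_n,a),\theta(h'_1,\dots,h'_n,a))\in H$ for all $a\in A$ and all $h_1,\dots,h_n,h'_1,\dots,h'_n\in H$; (C$_j$) $\alpha_i\big(\tau(a_1,\dots,a_{j-1},\theta(h_1,\dots,h_n,a_j),a_{j+1},\dots,a_k),\tau(a_1,\dots,a_k)\big)\in H$ for all $h_1,\dots,h_n\in H$ (where $1\le j\le k$). Then the following are equivalent: (i) $H$ is an ideal of $A$; (ii) $H$ is closed under $\theta$ and under each $\alpha_i$ ($1\le i\le n$), and (A) holds for every $\tau\in\mathcal{F}\cup\{\theta\}$, every $1\le i\le n$ and all $a_1,\dots,a_k\in A$; (iii) $0\in H$, $H$ is closed under $\theta$ and under $\alpha_i(-,0)$ for each $i$, and (A) holds for every $\tau\in\mathcal{F}\cup\{\theta\}\cup\{\alpha_j\mid1\le j\le n\}$, every $1\le i\le n$ and all $a_1,\dots,a_k\in A$; (iv) $H$ is closed under $\theta$ and under $\alpha_i(-,0)$ for each $i$,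 (A) holds for every $\tau\in\mathcal{F}$, every $1\le i\le n$ and all $a_1,\dots,a_k\in A$, and (B) holds for every $1\le i\le n$; (v) $H$ is closed under $\theta$ and under $\alpha_i(-,0)$ for each $i$, (B) holds for every $1\le i\le n$, and (C$_j$) holds for every $\tau\in\mathcal{F}$ of arity $k$, all $a_1,\dots,a_k\in A$ and all $1\le i\le n$, $1\le j\le k$; (vi) $0\in H$, $H$ is closed under $\theta$ and under $\alpha_i(-,0)$ for each $i$, for every $a\in A$ the $\sim_H$-class of $a$ equals $\theta(H,\dots,H,a)$, and (C$_j$) holds for every $\tau\in\mathcal{F}$ of arity $k$, all $a_1,\dots,a_k\in A$ and all $1\le i\le n$, $1\le j\le k$; (vii) $\sim_H$ is a congruence on $A$ and $H$ is its kernel (its class containing $0$). Moreover, if $\mathbb{V}$ is semi-abelian, then the equivalences remain valid when, in (ii), ''closed under $\theta$ and each $\alpha_i$'', in (iii), ''$0\in H$ and closed under $\theta$ and each $\alpha_i(-,0)$'', and in (iv) and (v), ''closed under $\theta$ and each $\alpha_i(-,0)$'' are replaced by ''$H$ is a subalgebra of $A$''.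
   Context: $\mathbb{V}$ is a variety with signature $\mathcal{F}$ (finitary operation symbols, constants being 0-ary). BIT speciale: the algebraic theory of $\mathbb{V}$ contains a constant $0$ and, for some $n\ge1$, binary terms $\alpha_1,\dots,\alpha_n$ and an $(n+1)$-ary term $\theta$ with identities $\alpha_i(x,x)=0$ and $\theta(\alpha_1(x,y),\dots,\alpha_n(x,y),y)=x$. Semi-abelian means (equivalently) BIT speciale with $0$ the only constant of the algebraic theory. An ideal term in variables $y_1,\dots,y_p$ is a term $t(x_1,\dots,x_m,y_1,\dots,y_p)$ with $t(x_1,\dots,x_m,0,\dots,0)=0$ an identity of $\mathbb{V}$; a non-empty $H\subseteq A$ is an ideal if $t(a_1,\dots,a_m,b_1,\dots,b_p)\in H$ for every ideal term $t$, all $a_r\in A$, $b_s\in H$. Notation: $\theta(H,\dots,H,a)=\{\theta(h_1,\dots,h_n,a)\mid h_1,\dots,h_n\in H\}$. For $a,b\in A$, $a\sim_H b$ iff $\theta(H,\dots,H,a)=\theta(H,\dots,H,b)$; this is an equivalence relation. ''Closed under $\theta$'' means $\theta(h_1,\dots,h_{n+1})\in H$ for all $h_r\in H$; ''closed under $\alpha_i$'' means $\alpha_i(h,h')\in H$ for all $h,h'\in H$; ''closed under $\alpha_i(-,0)$'' means $\alpha_i(h,0)\in H$ for all $h\in H$. When $\tau$ is a constant ($k=0$), condition (A) reads $\alpha_i(\tau,\tau)\in H$. *)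

From HB Require Import structures.
From mathcomp Require Import all_boot.
Set Implicit Arguments.
Unset Strict Implicit.
Unset Printing Implicit Defensive.

Section UniversalAlgebra.
Variables (F : Type) (ar : F -> nat).

Inductive term : Type :=
| Var : nat -> term
| App (f : F) (ts : 'I_(ar f) -> term) : term.

Record algebra : Type := Algebra {
  carrier :> Type;
  op : forall f : F, ('I_(ar f) -> carrier) -> carrier }.
Arguments op a f _ : clear implicits.

Fixpoint eval (A : algebra) (v : nat -> A) (t : term) : A :=
  match t with
  | Var j => v j
  | App f ts => op A f (fun i => eval v (ts i))
  end.

Fixpoint vars_lt (m : nat) (t : term) : Prop :=
  match t with
  | Var j => j < m
  | App f ts => forall i, vars_lt m (ts i)
  end.

Definition closed_term (t : term) : Prop := vars_lt 0 t.

Fixpoint subst (s : nat -> term) (t : term) : term :=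
  match t with
  | Var j => s j
  | App f ts => App (fun i => subst s (ts i))
  end.

(* A variety is presented by a set E of defining equations; its algebras are
   the models of E, and its identities are the equations valid in all models. *)
Definition model (E : term -> term -> Prop) (A : algebra) : Prop :=
  forall s t, E s t -> forall v : nat -> A, eval v s = eval v t.

Definition identity (E : term -> term -> Prop) (s t : term) : Prop :=
  forall B : algebra, model E B -> forall v : nat -> B, eval v s = eval v t.

Section BIT.
Variables (E : term -> term -> Prop) (n : nat)
          (zero : term) (alpha : 'I_n -> term) (theta : term).

(* 0 is a constant (closed term), alpha_i binary terms in x = x_0, y = x_1,
   theta an (n+1)-ary term in x_0, ..., x_n; plus the BIT speciale identities. *)
Definition is_BIT : Prop :=
  0 < n /\
  [/\ closed_term zero,
      (forall i, vars_lt 2 (alpha i)), vars_lt n.+1 theta,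
      (forall i, identity E (subst (fun _ => Var 0) (alpha i)) zero)
    & identity E (subst (fun j => oapp alpha (Var 1) (insub j : option 'I_n)) theta)
                 (Var 0)].

Definition is_semi_abelian : Prop :=
  is_BIT /\ forall c, closed_term c -> identity E c zero.

Section InAlgebra.
Variables (A : algebra) (H : A -> Prop).

Definition zeroA (x : A) : A := eval (fun _ => x) zero.
(* zero is closed, so zeroA x does not depend on x; it is "0" in A *)
Definition alphaA (i : 'I_n) (x y : A) : A :=
  eval (fun j => if j == 0 then x else y) (alpha i).
Definition thetaA (h : 'I_n -> A) (a : A) : A :=
  eval (fun j => oapp h a (insub j : option 'I_n)) theta.

Definition thetaOp (a : 'I_n.+1 -> A) : A :=
  thetaA (fun s => a (widen_ord (leqnSn n) s)) (a ord_max).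
Definition alphaOp (j : 'I_n) (a : 'I_2 -> A) : A :=
  alphaA j (a ord0) (a ord_max).

Definition inH (h : 'I_n -> A) : Prop := forall s, H (h s).

Definition ideal : Prop :=
  (exists h, H h) /\
  forall (m p : nat) (t : term), vars_lt (m + p) t ->
    identity E (subst (fun j => if j < m then Var j else zero) t) zero ->
    forall v : nat -> A, (forall j, m <= j < m + p -> H (v j)) -> H (eval v t).

Definition closed_theta : Prop :=
  forall h a, inH h -> H a -> H (thetaA h a).
Definition closed_alpha (i : 'I_n) : Prop :=
  forall x y, H x -> H y -> H (alphaA i x y).
Definition closed_alpha0 (i : 'I_n) : Prop :=
  forall x, H x -> H (alphaA i x (zeroA x)).
Definition zero_in : Prop := forall x, H (zeroA x).
Definition subalgebra : Prop :=
  forall f (a : 'I_(ar f) -> A), (forall r, H (a r)) -> H (op A f a).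

Definition condA (k : nat) (tau : ('I_k -> A) -> A) (a : 'I_k -> A) (i : 'I_n) : Prop :=
  forall hs : 'I_k -> 'I_n -> A, (forall r, inH (hs r)) ->
    H (alphaA i (tau (fun r => thetaA (hs r) (a r))) (tau a)).

Definition condB (i : 'I_n) : Prop :=
  forall a h h', inH h -> inH h' -> H (alphaA i (thetaA h a) (thetaA h' a)).

Definition condC (k : nat) (tau : ('I_k -> A) -> A) (a : 'I_k -> A)
    (i : 'I_n) (j : 'I_k) : Prop :=
  forall h, inH h ->
    H (alphaA i (tau (fun r => if r == j then thetaA h (a j) else a r)) (tau a)).

Definition thetaSet (a : A) (x : A) : Prop := exists2 h, inH h & x = thetaA h a.
Definition simH (a b : A) : Prop := forall x, thetaSet a x <-> thetaSet b x.

Definition is_congruence (R : A -> A -> Prop) : Prop :=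
  [/\ (forall a, R a a), (forall a b, R a b -> R b a),
      (forall a b c, R a b -> R b c -> R a c)
    & forall f (a b : 'I_(ar f) -> A), (forall r, R (a r) (b r)) -> R (op A f a) (op A f b)].

Definition condA_F : Prop := forall f a i, condA (op A f) a i.
Definition condA_theta : Prop := forall a i, condA thetaOp a i.
Definition condA_alpha : Prop := forall j a i, condA (alphaOp j) a i.
Definition condB_all : Prop := forall i, condB i.
Definition condC_F : Prop := forall f a i j, condC (op A f) a i j.

Definition cond_ii : Prop :=
  [/\ closed_theta, (forall i, closed_alpha i), condA_F & condA_theta].
Definition cond_iii : Prop :=
  zero_in /\
  [/\ closed_theta, (forall i, closed_alpha0 i), condA_F, condA_theta
    & condA_alpha].
Definition cond_iv : Prop :=
  [/\ closed_theta, (forall i, closed_alpha0 i), condA_F & condB_all].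
Definition cond_v : Prop :=
  [/\ closed_theta, (forall i, closed_alpha0 i), condB_all & condC_F].
Definition cond_vi : Prop :=
  [/\ zero_in, closed_theta, (forall i, closed_alpha0 i),
      (forall a x, simH x a <-> thetaSet a x) & condC_F].
Definition cond_vii : Prop :=
  is_congruence simH /\ forall x, H x <-> simH x (zeroA x).

Definition cond_ii' : Prop := [/\ subalgebra, condA_F & condA_theta].
Definition cond_iii' : Prop := [/\ subalgebra, condA_F, condA_theta & condA_alpha].
Definition cond_iv' : Prop := [/\ subalgebra, condA_F & condB_all].
Definition cond_v' : Prop := [/\ subalgebra, condB_all & condC_F].

End InAlgebra.
End BIT.
End UniversalAlgebra.

(* Everything turns on the relation x R y :<-> alpha_i(x, y) \in H for all i.
   Since theta(alpha(x, y), y) = x, x R y means x \in theta(H, ..., H, y).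
   Condition (A) for the basic operations says that R is compatible with them,
   (B) makes R symmetric and transitive, and then the R-classes are the sets
   theta(H, ..., H, a), so that R is ~_H. Conversely the kernel of a congruence
   is closed under every ideal term, and the expressions in (A) are values of
   ideal terms whose ideal variables are the perturbations h. *)

From mathcomp Require Import all_boot zify.
From Stdlib Require Import FunctionalExtensionality.
Set Implicit Arguments.
Unset Strict Implicit.
Unset Printing Implicit Defensive.

Section Terms.
Variables (F : Type) (ar : F -> nat) (A : algebra ar).

Lemma eq_eval (v w : nat -> A) (t : term ar) : v =1 w -> eval v t = eval w t.
Proof. by move=> /functional_extensionality ->. Qed.

Lemma eq_eval_lt k (v w : nat -> A) (t : term ar) :
  vars_lt k t -> (forall j, j < k -> v j = w j) -> eval v t = eval w t.
Proof.
elim: t => [j|f ts IH] /= t_k vw; first exact: vw.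
by congr (op _); apply: functional_extensionality => i; apply: IH.
Qed.

Lemma eval_closed (v w : nat -> A) (t : term ar) :
  closed_term t -> eval v t = eval w t.
Proof. by move=> t_cl; apply: (eq_eval_lt t_cl). Qed.

Lemma eval_subst (v : nat -> A) (s : nat -> term ar) (t : term ar) :
  eval v (subst s t) = eval (fun j => eval v (s j)) t.
Proof.
elim: t => [j|f ts IH] //=.
by congr (op _); apply: functional_extensionality => i.
Qed.

Lemma eval_App_vars f (a : 'I_(ar f) -> A) (x0 : A) :
  eval (fun j => oapp a x0 (insub j)) (App (fun r : 'I_(ar f) => Var ar r)) = op a.
Proof. by congr (op _); apply: functional_extensionality => r; rewrite /= valK. Qed.

Lemma vars_lt_le k m (t : term ar) : k <= m -> vars_lt k t -> vars_lt m t.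
Proof.
move=> km; elim: t => [j|f ts IH] /=; first by move/leq_trans; apply.
by move=> ts_k i; apply: IH.
Qed.

Lemma vars_lt_subst k m (s : nat -> term ar) (t : term ar) :
  vars_lt k t -> (forall j, j < k -> vars_lt m (s j)) -> vars_lt m (subst s t).
Proof.
elim: t => [j|f ts IH] /= t_k s_m; first exact: s_m.
by move=> i; apply: IH.
Qed.

End Terms.

Section PointwiseCompat.
Variables (T U : Type) (R : T -> T -> Prop) (S : U -> U -> Prop).
Hypotheses (S_refl : forall u, S u u) (S_trans : forall u v w, S u v -> S v w -> S u w).

Lemma compat_of_updates k (g : ('I_k -> T) -> U) :
  (forall c j y, R (c j) y -> S (g c) (g (fun r => if r == j then y else c r))) ->
  forall a b, (forall r, R (a r) (b r)) -> S (g a) (g b).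
Proof.
move=> g1 a b ab; pose mix l (r : 'I_k) := if r < l then b r else a r.
have mixS l : l <= k -> S (g a) (g (mix l)).
  elim: l => [|l IH] l_k.
    by rewrite [mix 0](_ : _ = a) //; apply: functional_extensionality.
  pose j := Ordinal l_k; apply: S_trans (IH (ltnW l_k)) _.
  rewrite [mix l.+1](_ : _ = fun r => if r == j then b j else mix l r).
    by apply: g1; rewrite /mix ltnn.
  apply: functional_extensionality => r; rewrite /mix ltnS leq_eqVlt.
  case: (eqVneq r j) => [->|r_j]; first by rewrite eqxx.
  by move: r_j; rewrite -val_eqE /= => /negbTE ->.
suff -> : b = mix k by apply: mixS.
by apply: functional_extensionality => r; rewrite /mix ltn_ord.
Qed.
End PointwiseCompat.

Section BIT.
Variables (F : Type) (ar : F -> nat) (E : term ar -> term ar -> Prop) (n : nat)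
  (zero : term ar) (alpha : 'I_n -> term ar) (theta : term ar).
Hypothesis hBIT : is_BIT E zero alpha theta.

Lemma BIT_n_gt0 : 0 < n. Proof. by case: hBIT. Qed.
Lemma BIT_zero_closed : closed_term zero. Proof. by case: hBIT => _ []. Qed.
Lemma BIT_alpha_vars i : vars_lt 2 (alpha i). Proof. by case: hBIT => _ []. Qed.
Lemma BIT_theta_vars : vars_lt n.+1 theta. Proof. by case: hBIT => _ []. Qed.

Section Model.
Variables (B : algebra ar) (hB : model E B).

Lemma zeroA_const (x y : B) : zeroA zero x = zeroA zero y.
Proof. exact: eval_closed BIT_zero_closed. Qed.

Lemma eval_zero (v : nat -> B) (x : B) : eval v zero = zeroA zero x.
Proof. exact: eval_closed BIT_zero_closed. Qed.

Lemma alphaA_xx i (x : B) : alphaA alpha i x x = zeroA zero x.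
Proof.
case: hBIT => _ [_ _ _ alpha_xx _].
rewrite /zeroA -(alpha_xx i B hB (fun=> x)) eval_subst.
by apply: eq_eval => j; case: ifP.
Qed.

Lemma thetaA_alphaA (x y : B) : thetaA theta (fun i => alphaA alpha i x y) y = x.
Proof.
case: hBIT => _ [_ _ _ _ theta_alpha].
rewrite -[RHS](theta_alpha B hB (fun j => if j == 0 then x else y)) eval_subst.
by apply: eq_eval => j; case: insub.
Qed.

Lemma thetaA_zero (z y : B) : thetaA theta (fun _ : 'I_n => zeroA zero z) y = y.
Proof.
rewrite -[RHS](thetaA_alphaA y y); congr thetaA.
by apply: functional_extensionality => i; rewrite alphaA_xx (zeroA_const z y).
Qed.

Lemma thetaOp_eval (a : 'I_n.+1 -> B) (x0 : B) :
  thetaOp theta a = eval (fun j => oapp a x0 (insub j)) theta.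
Proof.
apply: (eq_eval_lt BIT_theta_vars) => j j_le_n.
rewrite (insubT (fun j => j < n.+1) j_le_n) /=.
case: (@insubP _ _ 'I_n j) => [s _ j_s|/negbTE j_n] /=.
  by congr a; apply: val_inj; rewrite /= j_s.
by congr a; apply: val_inj => /=; lia.
Qed.

End Model.

Section Ideal.
Variables (A : algebra ar) (hA : model E A) (H : A -> Prop) (hH : exists h, H h).

Lemma ideal_eval m p (t : term ar) (v : nat -> A) : ideal E zero H ->
  vars_lt (m + p) t ->
  (forall B : algebra ar, model E B -> forall u : nat -> B,
     eval (fun j => if j < m then u j else zeroA zero (u 0)) t = zeroA zero (u 0)) ->
  (forall j, m <= j < m + p -> H (v j)) -> H (eval v t).
Proof.
case=> _ H_ideal t_vars t_vanish v_H; apply: (H_ideal m p t t_vars _ v v_H) => B hB u.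
rewrite eval_subst (eval_zero u (u 0)) -(t_vanish B hB u); apply: eq_eval => j.
by case: ifP => //= _; apply: eval_zero.
Qed.

Lemma ideal_closed_theta : ideal E zero H -> closed_theta n theta H.
Proof.
move=> H_ideal h a h_H a_H.
apply: (ideal_eval (m := 0) H_ideal BIT_theta_vars) => [B hB u|j _].
  by rewrite -[RHS](thetaA_zero hB (u 0)); apply: eq_eval => j; case: insub.
by case: insub.
Qed.

Lemma ideal_closed_alpha i : ideal E zero H -> closed_alpha alpha H i.
Proof.
move=> H_ideal x y x_H y_H.
apply: (ideal_eval (m := 0) H_ideal (BIT_alpha_vars i)) => [B hB u|j _].
  transitivity (alphaA alpha i (zeroA zero (u 0)) (zeroA zero (u 0))).
    by apply: eq_eval => j /=; case: ifP.
  by rewrite alphaA_xx //; apply: zeroA_const.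
by case: ifP.
Qed.

(* alpha_i(t[theta(y_j, x_j)/x_j], t) is an ideal term once x_j is the variable
   j < N and the s-th component of y_j is the variable N + j*n + s. *)
Lemma ideal_alphaA_eval i N (t : term ar) (a b : nat -> A) (hs : nat -> 'I_n -> A) :
  ideal E zero H -> vars_lt N t ->
  (forall j, j < N -> inH H (hs j) /\ b j = thetaA theta (hs j) (a j)) ->
  H (alphaA alpha i (eval b t) (eval a t)).
Proof.
move=> H_ideal t_vars b_theta.
have n_gt0 := BIT_n_gt0.
pose theta_at j :=
  subst (fun s => if s < n then Var ar (N + j * n + s) else Var ar j) theta.
pose T := subst (fun l => if l == 0 then subst theta_at t else t) (alpha i).
have theta_atE (B : algebra ar) (u : nat -> B) j :
    eval u (theta_at j) = thetaA theta (fun s : 'I_n => u (N + j * n + s)) (u j).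
  rewrite eval_subst; apply: eq_eval => l /=.
  by case: (@insubP _ _ 'I_n l) => [s -> <-|/negbTE ->].
have TE (B : algebra ar) (u : nat -> B) : eval u T =
    alphaA alpha i (eval (fun j => eval u (theta_at j)) t) (eval u t).
  by rewrite eval_subst; apply: eq_eval => l; case: ifP; rewrite ?eval_subst.
have T_vars : vars_lt (N + N * n) T.
  apply: (vars_lt_subst (BIT_alpha_vars i)) => l _; case: ifP => _.
    apply: (vars_lt_subst t_vars) => j j_N.
    apply: (vars_lt_subst BIT_theta_vars) => s _ /=; case: ifP => /=; nia.
  by apply: vars_lt_le t_vars; apply: leq_addr.
pose v k := if k < N then a k
            else hs ((k - N) %/ n) (Ordinal (ltn_pmod (k - N) n_gt0)).
have vE j (s : 'I_n) : v (N + j * n + s) = hs j s.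
  rewrite /v ifN -?leqNgt -?addnA ?leq_addr // addKn.
  congr hs; last apply: val_inj.
    by rewrite divnMDl // divn_small // addn0.
  by rewrite /= modnMDl modn_small.
have vT : eval v T = alphaA alpha i (eval b t) (eval a t).
  rewrite TE; congr alphaA; apply: (eq_eval_lt t_vars) => j j_N; last by rewrite /v j_N.
  have [_ ->] := b_theta j j_N; rewrite theta_atE; congr thetaA; last by rewrite /v j_N.
  by apply: functional_extensionality => s; apply: vE.
rewrite -vT; apply: (ideal_eval H_ideal T_vars) => [B hB u|k /andP [N_k k_lt]].
  rewrite TE !(eq_eval_lt (w := u) t_vars) => [|j j_N|j j_N].
  - by rewrite alphaA_xx //; apply: zeroA_const.
  - by rewrite j_N.
  rewrite theta_atE j_N -[RHS](thetaA_zero hB (u 0)); congr thetaA.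
  by apply: functional_extensionality => s; rewrite ltnNge -addnA leq_addr.
rewrite /v ltnNge N_k /=; apply: (proj1 (b_theta _ _)).
by rewrite ltn_divLR //; lia.
Qed.

Lemma ideal_condA_F : ideal E zero H -> condA_F alpha theta H.
Proof.
move=> H_ideal f a i hs hs_H; case: hH => x0 _.
rewrite -(eval_App_vars _ x0) -(eval_App_vars a x0).
pose hs' j := oapp hs (fun=> x0) (insub j).
apply: (ideal_alphaA_eval i (N := ar f) (hs := hs') H_ideal).
  by move=> r /=.
by move=> j j_f; rewrite /hs' (insubT (fun j => j < ar f) j_f); split; first exact: hs_H.
Qed.

Lemma ideal_condA_theta : ideal E zero H -> condA_theta alpha theta H.
Proof.
move=> H_ideal a i hs hs_H; case: hH => x0 _.
rewrite !(thetaOp_eval _ x0).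
pose hs' j := oapp hs (fun=> x0) (insub j).
apply: (ideal_alphaA_eval i (hs := hs') H_ideal BIT_theta_vars).
by move=> j j_n; rewrite /hs' (insubT (fun j => j < n.+1) j_n); split; first exact: hs_H.
Qed.

Lemma ideal_cond_ii : ideal E zero H -> cond_ii alpha theta H.
Proof.
move=> H_ideal; split; [exact: ideal_closed_theta | move=> i; exact: ideal_closed_alpha |
  exact: ideal_condA_F | exact: ideal_condA_theta].
Qed.

Definition alpha_rel (x y : A) : Prop := forall i, H (alphaA alpha i x y).

Let i0 : 'I_n := Ordinal BIT_n_gt0.

Lemma thetaSet_alpha_rel x y : alpha_rel x y -> thetaSet n theta H y x.
Proof. by move=> xy; exists (fun i => alphaA alpha i x y); rewrite ?thetaA_alphaA. Qed.

Lemma alpha_rel_eval (t : term ar) (v w : nat -> A) :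
  condA_F alpha theta H -> (forall j, alpha_rel (v j) (w j)) ->
  alpha_rel (eval v t) (eval w t).
Proof.
move=> condA; elim: t => [j|f ts IH] vw; first exact: vw.
move=> i /=; set hs := fun r i => alphaA alpha i (eval v (ts r)) (eval w (ts r)).
have := condA f (fun r => eval w (ts r)) i hs (fun r i => IH r vw i).
congr (H (alphaA _ _ (op _) _)); apply: functional_extensionality => r.
exact: thetaA_alphaA.
Qed.

Lemma zero_in_closed_alpha : (forall i, closed_alpha alpha H i) -> zero_in zero H.
Proof.
move=> closed x; case: hH => h h_H.
by rewrite (zeroA_const x h) -(alphaA_xx hA i0 h); apply: closed.
Qed.

(* Condition (A) for theta at the point (0, ..., 0, a), perturbed by
   alpha(g_s, 0) in the s-th argument: theta turns alpha(g_s, 0) back into g_s. *)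
Lemma alpha_rel_thetaA (g : 'I_n -> A) (a : A) : cond_ii alpha theta H ->
  inH H g -> alpha_rel (thetaA theta g a) a.
Proof.
case=> _ closed_a _ condA g_H i.
have H0 := zero_in_closed_alpha closed_a.
pose z := zeroA zero a.
pose k s i := alphaA alpha i (g s) z.
have := condA (fun r : 'I_n.+1 => oapp (fun=> z) a (insub (val r) : option 'I_n)) i
   (fun r : 'I_n.+1 => oapp k (fun=> z) (insub (val r) : option 'I_n)).
rewrite /thetaOp /= (insubF 'I_n (ltnn n)) /=.
have -> : (fun s : 'I_n => thetaA theta (oapp k (fun=> z) (insub (s : nat)))
                             (oapp (fun=> z) a (insub (s : nat) : option 'I_n))) = g.
  by apply: functional_extensionality => s; rewrite valK /= thetaA_alphaA.
have -> : (fun s : 'I_n => oapp (fun=> z) a (insub (s : nat) : option 'I_n)) = fun=> z.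
  by apply: functional_extensionality => s; rewrite valK.
rewrite !thetaA_zero //; apply=> r s.
case: (insub (val r) : option 'I_n) => [u|] /=; last exact: H0.
by apply: closed_a; [exact: g_H | exact: H0].
Qed.

Lemma cond_ii_iii : cond_ii alpha theta H -> cond_iii zero alpha theta H.
Proof.
move=> ii; have [closed_t closed_a condA_f condA_t] := ii.
have H0 := zero_in_closed_alpha closed_a.
split => //; split => // [i x x_H|j a i hs hs_H]; first exact: closed_a (H0 x).
apply: (alpha_rel_eval (alpha j) (w := fun l => if l == 0 then a ord0 else a ord_max)
  condA_f _ i) => l.
by case: ifP => _; apply: alpha_rel_thetaA.
Qed.

Lemma cond_iii_iv : cond_iii zero alpha theta H -> cond_iv zero alpha theta H.
Proof.
case=> H0 [closed_t closed_a0 condA_f _ condA_a]; split => // i a h h' h_H h'_H.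
set x := alphaA alpha i _ _.
rewrite -(thetaA_alphaA hA x (zeroA zero x)); apply: closed_t => // k.
have := condA_a i (fun=> a) k (fun r => if r == ord0 then h else h').
rewrite /alphaOp alphaA_xx // (zeroA_const a x); apply=> r.
by case: ifP.
Qed.

Lemma zero_in_condB : condB_all alpha theta H -> zero_in zero H.
Proof.
move=> condB x; case: hH => h h_H; pose y := thetaA theta (fun _ : 'I_n => h) h.
by rewrite (zeroA_const x y) -(alphaA_xx hA i0 y); apply: condB.
Qed.

Lemma cond_iv_v : cond_iv zero alpha theta H -> cond_v zero alpha theta H.
Proof.
case=> closed_t closed_a0 condA condB; split => // f a i j h h_H.
have H0 := zero_in_condB condB.
pose hs r := if r == j then h else fun=> zeroA zero (a r).
suff -> : (fun r : 'I_(ar f) => if r == j then thetaA theta h (a j) else a r) =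
          (fun r => thetaA theta (hs r) (a r)).
  by apply: condA => r; rewrite /hs; case: (r == j) => // s; apply: H0.
apply: functional_extensionality => r; rewrite /hs.
by case: eqP => [->|_]; rewrite ?thetaA_zero.
Qed.

Section CondB.
Hypothesis condB : condB_all alpha theta H.

Lemma thetaSet_alpha_relE a x : thetaSet n theta H a x <-> alpha_rel x a.
Proof.
split; last exact: thetaSet_alpha_rel.
case=> h h_H -> i; move: (condB i a h_H (fun=> zero_in_condB condB a)).
by rewrite thetaA_zero.
Qed.

Lemma alpha_rel_refl x : alpha_rel x x.
Proof. by move=> i; rewrite alphaA_xx //; apply: zero_in_condB. Qed.

Lemma alpha_rel_sym x y : alpha_rel x y -> alpha_rel y x.
Proof.
move/thetaSet_alpha_relE => [h h_H ->] i.
move: (condB i y (fun=> zero_in_condB condB y) h_H).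
by rewrite thetaA_zero.
Qed.

Lemma alpha_rel_trans x y z : alpha_rel x y -> alpha_rel y z -> alpha_rel x z.
Proof.
move=> xy /alpha_rel_sym zy.
move/thetaSet_alpha_relE: xy => [h h_H ->]; move/thetaSet_alpha_relE: zy => [h' h'_H ->] i.
exact: condB.
Qed.

Lemma simH_thetaSet a x : simH n theta H x a <-> thetaSet n theta H a x.
Proof.
split; first by move=> xa; apply/(xa x)/thetaSet_alpha_relE/alpha_rel_refl.
move/thetaSet_alpha_relE => xa y; rewrite !thetaSet_alpha_relE.
by split=> yx; [apply: alpha_rel_trans xa | apply: alpha_rel_trans (alpha_rel_sym xa)].
Qed.

End CondB.

Lemma cond_v_vi : cond_v zero alpha theta H -> cond_vi zero alpha theta H.
Proof.
case=> closed_t closed_a0 condB condC; split => //; first exact: zero_in_condB.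
by move=> a x; apply: simH_thetaSet.
Qed.

Lemma simH_equiv : [/\ forall a, simH n theta H a a,
  forall a b, simH n theta H a b -> simH n theta H b a &
  forall a b c, simH n theta H a b -> simH n theta H b c -> simH n theta H a c].
Proof.
split=> [a x|a b ab x|a b c ab bc x]; first exact: iff_refl.
  exact: iff_sym.
exact: iff_trans (ab x) (bc x).
Qed.

Lemma cond_vi_vii : cond_vi zero alpha theta H -> cond_vii n zero theta H.
Proof.
case=> H0 closed_t closed_a0 classE condC; have [refl sym trans] := simH_equiv.
split; first split => // f.
  apply: compat_of_updates => // c j y /sym /classE [h h_H ->].
  by apply/sym/classE/thetaSet_alpha_rel => i; apply: condC.
move=> x; split => [x_H|/classE [h h_H ->]]; last exact: closed_t (H0 _).
apply/classE; exists (fun i => alphaA alpha i x (zeroA zero x)).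
  by move=> i; apply: closed_a0.
by rewrite thetaA_alphaA.
Qed.

Section CondVII.
Hypothesis vii : cond_vii n zero theta H.

Lemma simH_eval (t : term ar) (v w : nat -> A) :
  (forall j, simH n theta H (v j) (w j)) -> simH n theta H (eval v t) (eval w t).
Proof.
have [[_ _ _ compat] _] := vii.
by elim: t => [j|f ts IH] vw /=; [exact: vw | apply: compat => r; apply: IH].
Qed.

Lemma memH_simH0 x y : H x <-> simH n theta H x (zeroA zero y).
Proof. by have [_ kerH] := vii; rewrite (zeroA_const y x). Qed.

Lemma cond_vii_ideal : ideal E zero H.
Proof.
have [[refl _ _ _] _] := vii.
split=> // m p t t_vars t_vanish v v_H.
pose z := zeroA zero (v 0).
pose w j := if j < m then v j else if j < m + p then z else v j.
have vw : simH n theta H (eval v t) (eval w t).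
  apply: simH_eval => j; rewrite /w; case: ifP => j_m //.
  case: ifP => j_mp //; apply/(memH_simH0 _ (v 0))/v_H.
  by rewrite j_mp leqNgt j_m.
have wE : eval w t = z.
  rewrite /z -(eval_zero v) -(t_vanish A hA v) eval_subst.
  apply: (eq_eval_lt t_vars) => j j_mp; rewrite /w j_mp.
  by case: ifP => //= _; rewrite /z (eval_zero v (v 0)).
by apply/(memH_simH0 _ (v 0)); rewrite -/z -wE.
Qed.

End CondVII.

Lemma ideal_tfae :
  [<-> ideal E zero H; cond_ii alpha theta H; cond_iii zero alpha theta H;
       cond_iv zero alpha theta H; cond_v zero alpha theta H;
       cond_vi zero alpha theta H; cond_vii n zero theta H].
Proof.
tfae; [exact: ideal_cond_ii | exact: cond_ii_iii | exact: cond_iii_iv |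
  exact: cond_iv_v | exact: cond_v_vi | exact: cond_vi_vii | exact: cond_vii_ideal].
Qed.

Section Subalgebra.
Hypothesis H_sub : subalgebra H.

Lemma subalgebra_eval k (t : term ar) (v : nat -> A) :
  vars_lt k t -> (forall j, j < k -> H (v j)) -> H (eval v t).
Proof.
elim: t => [j|f ts IH] /= t_k v_H; first exact: v_H.
by apply: H_sub => r; apply: IH.
Qed.

Lemma subalgebra_closed_theta : closed_theta n theta H.
Proof.
move=> h a h_H a_H; apply: (subalgebra_eval BIT_theta_vars) => j _.
by case: insub.
Qed.

Lemma subalgebra_closed_alpha i : closed_alpha alpha H i.
Proof.
by move=> x y x_H y_H; apply: (subalgebra_eval (BIT_alpha_vars i)) => j _; case: ifP.
Qed.

Lemma subalgebra_closed_alpha0 i : closed_alpha0 zero alpha H i.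
Proof.
move=> x x_H; apply: subalgebra_closed_alpha => //.
exact: (subalgebra_eval BIT_zero_closed).
Qed.

Lemma subalgebra_cond_ii :
  condA_F alpha theta H -> condA_theta alpha theta H -> cond_ii alpha theta H.
Proof.
by split=> //; [exact: subalgebra_closed_theta | exact: subalgebra_closed_alpha].
Qed.

End Subalgebra.

Lemma ideal_subalgebra : is_semi_abelian E zero alpha theta ->
  ideal E zero H -> subalgebra H.
Proof.
case=> _ const_zero H_ideal f a a_H; case: hH => x0 _.
rewrite -(eval_App_vars a x0).
apply: (ideal_eval (m := 0) (p := ar f) H_ideal) => [r|B hB u|j /andP [_ j_f]].
- by rewrite add0n.
- have c_closed : closed_term (App (fun _ : 'I_(ar f) => zero)).
    by move=> r; exact: BIT_zero_closed.
  rewrite -[RHS](eval_zero u) -[RHS](const_zero _ c_closed B hB u) /=.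
  by congr op; apply: functional_extensionality => r; rewrite (eval_zero u (u 0)).
- by rewrite add0n in j_f; rewrite (insubT (fun j => j < ar f) j_f); apply: a_H.
Qed.

Lemma ideal_tfae_semi_abelian : is_semi_abelian E zero alpha theta ->
  [<-> ideal E zero H; cond_ii' alpha theta H; cond_iii' alpha theta H;
       cond_iv' alpha theta H; cond_v' alpha theta H;
       cond_vi zero alpha theta H; cond_vii n zero theta H].
Proof.
move=> semi_ab; tfae.
- move=> H_ideal; split; [exact: ideal_subalgebra | exact: ideal_condA_F |
    exact: ideal_condA_theta].
- case=> H_sub condA_f condA_t; have ii := subalgebra_cond_ii H_sub condA_f condA_t.
  by have [_ [_ _ _ _ condA_a]] := cond_ii_iii ii; split.
- case=> H_sub condA_f condA_t _; have ii := subalgebra_cond_ii H_sub condA_f condA_t.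
  by have [_ _ _ condB] := cond_iii_iv (cond_ii_iii ii); split.
- case=> H_sub condA_f condB; split=> //.
  have [] // := @cond_iv_v (And4 (subalgebra_closed_theta H_sub)
    (subalgebra_closed_alpha0 H_sub) condA_f condB).
- case=> H_sub condB condC; apply: cond_v_vi.
  by split=> //; [exact: subalgebra_closed_theta | exact: subalgebra_closed_alpha0].
- exact: cond_vi_vii.
- exact: cond_vii_ideal.
Qed.

End Ideal.
End BIT.

Unset Implicit Arguments.
Set Strict Implicit.

Theorem theorem2p5 (F : Type) (ar : F -> nat) (E : term ar -> term ar -> Prop)
    (n : nat) (zero : term ar) (alpha : 'I_n -> term ar) (theta : term ar)
    (hBIT : is_BIT E zero alpha theta)
    (A : algebra ar) (hA : model E A) (H : A -> Prop) (hH : exists h, H h) :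
  [<-> ideal E zero H;
       cond_ii alpha theta H;
       cond_iii zero alpha theta H;
       cond_iv zero alpha theta H;
       cond_v zero alpha theta H;
       cond_vi zero alpha theta H;
       cond_vii n zero theta H]
  /\ (is_semi_abelian E zero alpha theta ->
      [<-> ideal E zero H;
           cond_ii' alpha theta H;
           cond_iii' alpha theta H;
           cond_iv' alpha theta H;
           cond_v' alpha theta H;
           cond_vi zero alpha theta H;
           cond_vii n zero theta H]).
Proof.
split; first exact: (ideal_tfae hBIT hA hH).
exact: (ideal_tfae_semi_abelian hBIT hA hH).
Qed.
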